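(* Let $(W,V)$ be an independent-type $\mathcal Y$-valued transition matrix on $\mathcal X$ with $W(x|x')=\frac1d$ for all $x,x'\in\mathcal X$, and let $P$ be a distribution on $\mathcal X$. Then $$\mathcal L^I_{2,W,V}=\big\{([W,A],(A^TV_y)_{y\in\mathcal Y})\in\mathcal G^I:\ A\in M_d(\mathbb R),\ A^Tu_{\mathcal X}=0\big\},$$ $$\mathcal L^I_{2,P,W,V}=\big\{([W,A],(A^TV_y)_{y\in\mathcal Y})\in\mathcal G^I:\ A\in M_d(\mathbb R),\ A^Tu_{\mathcal X}=0,\ AP=0\big\},$$ where $[X,Y]=XY-YX$.
   Context: Let $\mathcal X=\{1,\dots,d\}$, $\mathcal Y=\{1,\dots,d_Y\}$, $u_{\mathcal X}\in\mathbb R^{\mathcal X}$ the all-ones vector. An independent-type $\mathcal Y$-valued transition matrix $(W,V)$ consists of a column-stochastic $d\times d$ matrix $W(x|x')$ and a transition matrix $V$ from $\mathcal X$ to $\mathcal Y$ ($V(y|x')\ge0$, $\sum_yV(y|x')=1$), defining $W_y:=WD(V_y)$, where $V_y\in\mathbb R^{\mathcal X}$, $V_y(x')=V(y|x')$, and $D(v)$ is the diagonal matrix with diagonal $v$. $\mathcal G^I$ is the set of pairs $(B,C)$ with $B$ a real $d\times d$ matrix vanishing wherever $W(x|x')=0$ and $C=(C_y)_{y\in\mathcal Y}$, $C_y\in\mathbb R^{\mathcal X}$, $C_y(x')=0$ wherever $V(y|x')=0$. $\mathcal L^I_{1,W,V}:=\{(B,C)\in\mathcal G^I: B^Tu_{\mathcal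 X}=0,\ \sum_yC_y=0\}$. Let $\mathcal L_2:=\{(W_yA-AW_y)_{y\in\mathcal Y}: A\in M_d(\mathbb R),\ A^Tu_{\mathcal X}=0\}$ and $\mathcal L_{2,P}:=\{(W_yA-AW_y)_{y}: A^Tu_{\mathcal X}=0,\ AP=0\}$. Then $\mathcal L^I_{2,W,V}:=\{(B,C)\in\mathcal L^I_{1,W,V}: (BD(V_y)+WD(C_y))_{y}\in\mathcal L_2\}$ and $\mathcal L^I_{2,P,W,V}:=\{(B,C)\in\mathcal L^I_{1,W,V}:(BD(V_y)+WD(C_y))_y\in\mathcal L_{2,P}\}$. *)

(* Real numbers are modelled by an arbitrary realFieldType R
   (the statement is purely linear-algebraic). X = 'I_d, Y = 'I_dY. *)
From HB Require Import structures.
From mathcomp Require Import all_boot all_order all_algebra.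
Set Implicit Arguments. Unset Strict Implicit. Unset Printing Implicit Defensive.
Import Order.TTheory GRing.Theory Num.Theory.
Local Open Scope ring_scope.

Section Defs.
Variables (R : realFieldType) (d dY : nat).

Definition onesX : 'cV[R]_d := const_mx 1.

Definition Dmx (v : 'cV[R]_d) : 'M[R]_d := diag_mx v^T.

(* W(x|x') = W x x' ; V(y|x') = V y x' *)
Definition col_stochastic (W : 'M[R]_d) : Prop :=
  (forall x x', 0 <= W x x') /\ (forall x', \sum_x W x x' = 1).

Definition transition_XY (V : 'M[R]_(dY, d)) : Prop :=
  (forall y x', 0 <= V y x') /\ (forall x', \sum_y V y x' = 1).

Definition is_distribution (P : 'cV[R]_d) : Prop :=
  (forall x, 0 <= P x 0) /\ \sum_x P x 0 = 1.

Definition Vy (V : 'M[R]_(dY, d)) (y : 'I_dY) : 'cV[R]_d := (row y V)^T.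

Definition Wy (W : 'M[R]_d) (V : 'M[R]_(dY, d)) (y : 'I_dY) : 'M[R]_d :=
  W *m Dmx (Vy V y).

Definition inGI (W : 'M[R]_d) (V : 'M[R]_(dY, d))
  (B : 'M[R]_d) (C : 'I_dY -> 'cV[R]_d) : Prop :=
  (forall x x', W x x' = 0 -> B x x' = 0) /\
  (forall y x', V y x' = 0 -> C y x' 0 = 0).

Definition inL1I W V B C : Prop :=
  inGI W V B C /\ B^T *m onesX = 0 /\ \sum_(y < dY) C y = 0.

Definition inL2 W V (F : 'I_dY -> 'M[R]_d) : Prop :=
  exists A : 'M[R]_d, A^T *m onesX = 0 /\
    forall y, F y = Wy W V y *m A - A *m Wy W V y.

Definition inL2P (P : 'cV[R]_d) W V (F : 'I_dY -> 'M[R]_d) : Prop :=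
  exists A : 'M[R]_d, A^T *m onesX = 0 /\ A *m P = 0 /\
    forall y, F y = Wy W V y *m A - A *m Wy W V y.

Definition inL2I W V B C : Prop :=
  inL1I W V B C /\
  inL2 W V (fun y => B *m Dmx (Vy V y) + W *m Dmx (C y)).

Definition inL2PI P W V B C : Prop :=
  inL1I W V B C /\
  inL2P P W V (fun y => B *m Dmx (Vy V y) + W *m Dmx (C y)).

End Defs.

From HB Require Import structures.
From mathcomp Require Import all_boot all_order all_algebra.
Set Implicit Arguments. Unset Strict Implicit. Unset Printing Implicit Defensive.
Import Order.TTheory GRing.Theory Num.Theory.
Local Open Scope ring_scope.

(* Summing the defining equations of L_2 over y (with sum_y V_y = u and
   sum_y C_y = 0) forces B = [W, A].  For the uniform W one has W A = 0 whenever
   A^T u = 0 and W D(v) A = W D(A^T v), so what remains of each equation is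
   W D(C_y) = W D(A^T V_y); as v |-> W D(v) is injective, C_y = A^T V_y.  The
   same identities give the converse inclusion. *)

Section DiagonalMatrix.
Variables (R : realFieldType) (d : nat).

Lemma Dmx_sum (I : Type) (r : seq I) (P : pred I) (v : I -> 'cV[R]_d) :
  Dmx (\sum_(i <- r | P i) v i) = \sum_(i <- r | P i) Dmx (v i).
Proof. by rewrite /Dmx raddf_sum linear_sum. Qed.

Lemma Dmx0 : Dmx (0 : 'cV[R]_d) = 0.
Proof. by rewrite /Dmx trmx0 linear0. Qed.

Lemma Dmx_ones : Dmx (onesX R d) = 1%:M.
Proof. by rewrite /Dmx trmx_const diag_const_mx. Qed.

Lemma trmx_col_stochastic_ones (W : 'M[R]_d) :
  col_stochastic W -> W^T *m onesX R d = onesX R d.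
Proof.
move=> [_ sumW]; apply/matrixP => x' z; rewrite !mxE -(sumW x').
by apply: eq_bigr => x _; rewrite !mxE mulr1.
Qed.

Lemma trmx_commutator_ones (W A : 'M[R]_d) :
  W^T *m onesX R d = onesX R d -> A^T *m onesX R d = 0 ->
  (W *m A - A *m W)^T *m onesX R d = 0.
Proof.
move=> Wones Aones.
by rewrite linearB /= !trmx_mul mulmxBl -!mulmxA Wones Aones mulmx0 subrr.
Qed.

End DiagonalMatrix.

Section TransitionXY.
Variables (R : realFieldType) (d dY : nat) (V : 'M[R]_(dY, d)).
Hypothesis V_trans : transition_XY V.

Lemma sum_Vy : \sum_y Vy V y = onesX R d.
Proof.
apply/matrixP => x' z; rewrite summxE !mxE -(V_trans.2 x').
by apply: eq_bigr => y _; rewrite !mxE.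
Qed.

Lemma sum_Wy (W : 'M[R]_d) : \sum_y Wy W V y = W.
Proof. by rewrite -mulmx_sumr -Dmx_sum sum_Vy Dmx_ones mulmx1. Qed.

End TransitionXY.

Section ConstantMatrix.
Variables (R : realFieldType) (d : nat) (c : R) (W : 'M[R]_d).
Hypothesis W_const : forall x x', W x x' = c.

Lemma colsum_onesX (A : 'M[R]_d) j : (A^T *m onesX R d) j 0 = \sum_k A k j.
Proof. by rewrite !mxE; apply: eq_bigr => k _; rewrite !mxE mulr1. Qed.

Lemma const_mul_colsum0 (A : 'M[R]_d) : A^T *m onesX R d = 0 -> W *m A = 0.
Proof.
move=> Aones; apply/matrixP => i j; rewrite !mxE.
under eq_bigr => k _ do rewrite W_const.
by rewrite -mulr_sumr -colsum_onesX Aones mxE mulr0.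
Qed.

Lemma const_mulDmx_mul (v : 'cV[R]_d) (A : 'M[R]_d) :
  W *m Dmx v *m A = W *m Dmx (A^T *m v).
Proof.
apply/matrixP => i j; rewrite /Dmx !mul_mx_diag !mxE mulr_sumr.
by apply: eq_bigr => k _; rewrite !mxE !W_const -mulrA (mulrC (v k 0)).
Qed.

Lemma const_mulDmx_inj : col_stochastic W -> injective (fun v => W *m Dmx v).
Proof.
move=> [_ sumW] u v /matrixP /= Wuv; apply/matrixP => j z; rewrite ord1.
have c_neq0 : c != 0.
  have : \sum_(x < d) c = 1.
    by rewrite -(sumW j); apply: eq_bigr => x _; rewrite W_const.
  by apply: contra_eq_neq => ->; rewrite big1_eq eq_sym oner_eq0.
move: (Wuv j j); rewrite /Dmx !mul_mx_diag !mxE W_const.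
exact: mulfI.
Qed.

Lemma L2_condition_iff (dY : nat) (V : 'M[R]_(dY, d)) (A B : 'M[R]_d)
    (C : 'I_dY -> 'cV[R]_d) :
  col_stochastic W -> transition_XY V -> A^T *m onesX R d = 0 ->
  (\sum_y C y = 0 /\
     forall y, B *m Dmx (Vy V y) + W *m Dmx (C y) = Wy W V y *m A - A *m Wy W V y)
  <-> (B = W *m A - A *m W /\ forall y, C y = A^T *m Vy V y).
Proof.
move=> W_stoch V_trans Aones; have WA0 := const_mul_colsum0 Aones.
split => [[sumC L2] | [-> C_eq]]; last first.
  split; first by under eq_bigr do rewrite C_eq; rewrite -mulmx_sumr sum_Vy.
  move=> y; rewrite C_eq -const_mulDmx_mul /Wy mulmxBl WA0 mul0mx sub0r mulmxA.
  by rewrite addrC.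
have B_comm : B = W *m A - A *m W.
  transitivity (\sum_y (B *m Dmx (Vy V y) + W *m Dmx (C y))).
    rewrite big_split /= -!mulmx_sumr -!Dmx_sum sumC Dmx0 mulmx0 addr0.
    by rewrite sum_Vy // Dmx_ones mulmx1.
  under eq_bigr do rewrite L2.
  by rewrite sumrB -mulmx_suml sum_Wy // -mulmx_sumr sum_Wy.
split => // y; apply: (const_mulDmx_inj W_stoch); rewrite /= -const_mulDmx_mul.
move: (L2 y); rewrite B_comm /Wy mulmxBl WA0 mul0mx sub0r mulmxA addrC.
exact: addIr.
Qed.

End ConstantMatrix.

Theorem corollary3 (R : realFieldType) (d dY : nat)
  (W : 'M[R]_d) (V : 'M[R]_(dY, d)) (P : 'cV[R]_d) :
  col_stochastic W -> transition_XY V ->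
  (forall x x' : 'I_d, W x x' = (d%:R)^-1) ->
  is_distribution P ->
  (forall (B : 'M[R]_d) (C : 'I_dY -> 'cV[R]_d),
     inL2I W V B C <->
     exists A : 'M[R]_d, A^T *m onesX R d = 0 /\
       B = W *m A - A *m W /\ (forall y, C y = A^T *m Vy V y) /\
       inGI W V B C) /\
  (forall (B : 'M[R]_d) (C : 'I_dY -> 'cV[R]_d),
     inL2PI P W V B C <->
     exists A : 'M[R]_d, A^T *m onesX R d = 0 /\ A *m P = 0 /\
       B = W *m A - A *m W /\ (forall y, C y = A^T *m Vy V y) /\
       inGI W V B C).
Proof.
move=> W_stoch V_trans W_unif _.
have L2_iff A B C := L2_condition_iff W_unif B C W_stoch V_trans (A := A).
have B_ones A := trmx_commutator_ones (trmx_col_stochastic_ones W_stoch) (A := A).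
split=> B C; split.
- move=> [[GI [_ sumC]] [A [Aones L2]]].
  by have [B_comm C_eq] := (L2_iff A B C Aones).1 (conj sumC L2); exists A.
- move=> [A [Aones [B_comm [C_eq GI]]]].
  have [sumC L2] := (L2_iff A B C Aones).2 (conj B_comm C_eq).
  split; last by exists A.
  by split=> //; split=> //; rewrite B_comm B_ones.
- move=> [[GI [_ sumC]] [A [Aones [AP L2]]]].
  by have [B_comm C_eq] := (L2_iff A B C Aones).1 (conj sumC L2); exists A.
- move=> [A [Aones [AP [B_comm [C_eq GI]]]]].
  have [sumC L2] := (L2_iff A B C Aones).2 (conj B_comm C_eq).
  split; last by exists A.
  by split=> //; split=> //; rewrite B_comm B_ones.
Qed.
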